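(* Let $\lambda>0$ and let $\lambda_1,\dots,\lambda_M>0$. (i) For each $p\ge 0$, the equation $$t=\sum_{\rho=1}^M\Big(\frac{1}{\lambda_\rho}+\frac{p}{\lambda+t}\Big)^{-1}$$ has a unique solution $t(p)\in(0,\infty)$, and $p\mapsto t(p)$ is differentiable. (ii) With $\gamma(p)=\sum_\rho\big(\frac{1}{\lambda_\rho}+\frac{p}{\lambda+t(p)}\big)^{-2}$, one has $(\lambda+t(p))^2>p\,\gamma(p)$ and $$t'(p)=-\frac{(\lambda+t)\,\gamma}{(\lambda+t)^2-p\gamma}<0.$$ (iii) Let $c_\rho>0$ and define $$E_\rho(p)=\frac{c_\rho}{\lambda_\rho}\Big(\frac{1}{\lambda_\rho}+\frac{p}{\lambda+t(p)}\Big)^{-2}\Big(1-\frac{p\gamma(p)}{(\lambda+t(p))^2}\Big)^{-1}.$$ If $\lambda_\gamma>\lambda_\rho$, then for all $p>0$, $$\frac{d}{dp}\log E_\rho(p)>\frac{d}{dp}\log E_\gamma(p).$$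
   Context: This concerns the theoretical mode-error learning curves of kernel ridge regression with ridge parameter $\lambda$ and kernel eigenvalues $\lambda_\rho$. In the application, $c_\rho=\langle\overline{w}_\rho^2\rangle$ is the second moment of the target's $\rho$-th feature coefficient. The index $\gamma$ in part (iii) is a mode label and should not be confused with the function $\gamma(p)$. *)

From Stdlib Require Import Reals.
Open Scope R_scope.

(* sumR M f = f 0 + f 1 + ... + f (M-1); modes are indexed 0..M-1. *)
Fixpoint sumR (M : nat) (f : nat -> R) : R :=
  match M with
  | O => 0
  | S m => sumR m f + f m
  end.

Definition Fsc (M : nat) (lam : R) (lams : nat -> R) (p t : R) : R :=
  sumR M (fun r => / (/ lams r + p / (lam + t))).

Definition Gam (M : nat) (lam : R) (lams : nat -> R) (p t : R) : R :=
  sumR M (fun r => / (/ lams r + p / (lam + t)) ^ 2).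

Definition tderiv (M : nat) (lam : R) (lams : nat -> R) (T : R -> R) (p : R) : R :=
  - ((lam + T p) * Gam M lam lams p (T p))
    / ((lam + T p) ^ 2 - p * Gam M lam lams p (T p)).

Definition Emode (M : nat) (lam : R) (lams c : nat -> R) (T : R -> R)
    (r : nat) (p : R) : R :=
  c r / lams r * / (/ lams r + p / (lam + T p)) ^ 2
  * / (1 - p * Gam M lam lams p (T p) / (lam + T p) ^ 2).

From Stdlib Require Import Reals Ranalysis5 Lra Lia.
From Coquelicot Require Import Coquelicot.
Open Scope R_scope.

(* Write A_r = (lam + t')/lams r + q and B_r = (lam + t)/lams r + p.  Summing the
   per-mode identity  1/(1/lams r + q/(lam + t')) - 1/(1/lams r + p/(lam + t))
   = (p (lam + t') - q (lam + t)) / (A_r B_r)  over two fixed points, t at p and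
   t' at q, gives the secant identity

     (t' - t) (1 - p S) = - (q - p) (lam + t) S,     S = sum_r 1/(A_r B_r),

   and the fixed-point equation at q forces 1 - p S >= lam/(lam + t') > 0.  With
   q = p this is uniqueness (existence is the intermediate value theorem, as
   0 < F(p,t) <= sum_r lams r).  In general it makes t(.) Lipschitz and writes its
   difference quotients as -(lam + t) S/(1 - p S), where S -> gamma/(lam + t)^2 as
   q -> p: this is the derivative formula, and (ii) follows.  For (iii), log E_r
   depends on r only through log (c_r/lams r) - 2 log (1/lams r + s(p)) with
   s(p) = p/(lam + t(p)) increasing, whose derivative -2 s'/(1/lams r + s) is larger
   for smaller lams r. *)

Lemma sumR_ext (M : nat) (f g : nat -> R) :
  (forall r, (r < M)%nat -> f r = g r) -> sumR M f = sumR M g.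
Proof.
induction M as [|m IH]; intros Hfg; simpl; [reflexivity|].
rewrite IH by (intros; apply Hfg; lia).
rewrite Hfg by lia; reflexivity.
Qed.

Lemma sumR_minus (M : nat) (f g : nat -> R) :
  sumR M (fun r => f r - g r) = sumR M f - sumR M g.
Proof. induction M as [|m IH]; simpl; [ring | rewrite IH; ring]. Qed.

Lemma sumR_mult_l (M : nat) (a : R) (f : nat -> R) :
  sumR M (fun r => a * f r) = a * sumR M f.
Proof. induction M as [|m IH]; simpl; [ring | rewrite IH; ring]. Qed.

Lemma sumR_le (M : nat) (f g : nat -> R) :
  (forall r, (r < M)%nat -> f r <= g r) -> sumR M f <= sumR M g.
Proof.
induction M as [|m IH]; intros Hfg; simpl; [lra|].
assert (sumR m f <= sumR m g) by (apply IH; intros; apply Hfg; lia).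
assert (f m <= g m) by (apply Hfg; lia).
lra.
Qed.

Lemma sumR_ge0 (M : nat) (f : nat -> R) :
  (forall r, (r < M)%nat -> 0 <= f r) -> 0 <= sumR M f.
Proof.
induction M as [|m IH]; intros Hf; simpl; [lra|].
assert (0 <= sumR m f) by (apply IH; intros; apply Hf; lia).
assert (0 <= f m) by (apply Hf; lia).
lra.
Qed.

Lemma sumR_gt0 (M : nat) (f : nat -> R) :
  (1 <= M)%nat -> (forall r, (r < M)%nat -> 0 < f r) -> 0 < sumR M f.
Proof.
destruct M as [|m]; [lia|]; intros _ Hf; simpl.
assert (0 <= sumR m f) by (apply sumR_ge0; intros; left; apply Hf; lia).
assert (0 < f m) by (apply Hf; lia).
lra.
Qed.

Lemma limit1_in_const (c : R) (D : R -> Prop) (x0 : R) : limit1_in (fun _ => c) D c x0.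
Proof. exact (limit_free (fun _ => c) D 0 x0). Qed.

Lemma limit1_in_sumR (M : nat) (f : nat -> R -> R) (D : R -> Prop) (l : nat -> R) (x0 : R) :
  (forall r, (r < M)%nat -> limit1_in (f r) D (l r) x0) ->
  limit1_in (fun x => sumR M (fun r => f r x)) D (sumR M l) x0.
Proof.
induction M as [|m IH]; intros Hf; simpl.
- apply limit1_in_const.
- apply (limit_plus (fun x => sumR m (fun r => f r x)) (f m));
    [apply IH; intros; apply Hf | apply Hf]; lia.
Qed.

Lemma ex_derive_sumR (M : nat) (f : nat -> R -> R) (x : R) :
  (forall r, (r < M)%nat -> ex_derive (f r) x) ->
  ex_derive (fun y => sumR M (fun r => f r y)) x.
Proof.
induction M as [|m IH]; intros Hf; simpl.
- apply ex_derive_const.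
- apply (ex_derive_plus (fun y => sumR m (fun r => f r y)) (f m));
    [apply IH; intros; apply Hf | apply Hf]; lia.
Qed.

Definition nonneg_punctured (p q : R) : Prop := 0 <= q /\ q <> p.

Lemma derivable_pt_lim_of_nonneg_limit (f : R -> R) (x l : R) : 0 < x ->
  limit1_in (fun y => (f y - f x) / (y - x)) (nonneg_punctured x) l x ->
  derivable_pt_lim f x l.
Proof.
intros Hx Hlim eps Heps; destruct (Hlim eps Heps) as [delta [Hdelta Hclose]].
assert (Hmin : 0 < Rmin delta x) by (apply Rmin_pos; lra).
exists (mkposreal _ Hmin); intros h Hh Hhlt; simpl in Hhlt.
pose proof (Rmin_l delta x); pose proof (Rmin_r delta x).
destruct (Rabs_def2 h (Rmin delta x)) as [_ Hhx]; [lra|].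
specialize (Hclose (x + h)); simpl in Hclose; unfold R_dist in Hclose.
replace (x + h - x) with h in Hclose by ring.
apply Hclose; repeat split; lra.
Qed.

Lemma right_limit_of_nonneg_limit (f : R -> R) (l : R) :
  limit1_in (fun y => (f y - f 0) / (y - 0)) (nonneg_punctured 0) l 0 ->
  limit1_in (fun h => (f h - f 0) / h) (fun h => 0 < h) l 0.
Proof.
intros Hlim eps Heps; destruct (Hlim eps Heps) as [delta [Hdelta Hclose]].
exists delta; split; [exact Hdelta|]; intros h [Hh Hhd].
rewrite <- (Rminus_0_r h) at 2; apply Hclose; split; [split; lra | exact Hhd].
Qed.

Lemma is_derive_ln_mode (T w : R -> R) (lam l cr p dT : R) :
  0 < lam -> 0 < l -> 0 < cr -> 0 < p -> 0 < T p ->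
  is_derive T p dT -> ex_derive w p -> 0 < w p ->
  is_derive (fun q => ln (cr / l * / (/ l + q / (lam + T q)) ^ 2 * w q)) p
    (-2 * (/ (lam + T p) - p * dT / (lam + T p) ^ 2) / (/ l + p / (lam + T p))
     + Derive w p / w p).
Proof.
intros Hlam Hl Hcr Hp HTp HdT Hw Hwp.
assert (0 < / l) by (apply Rinv_0_lt_compat; lra).
assert (0 < p * / (lam + T p)) by (apply Rmult_lt_0_compat; [|apply Rinv_0_lt_compat]; lra).
assert (0 < cr / l) by (apply Rdiv_lt_0_compat; lra).
assert (0 < / (/ l + p * / (lam + T p)) ^ 2) by (apply Rinv_0_lt_compat, pow_lt; lra).
auto_derive.
- repeat split; try nra; [exists dT; exact HdT | exact Hw |].
  apply Rmult_lt_0_compat; [apply Rmult_lt_0_compat|]; auto.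
- replace (Derive (fun x : R => T x) p) with dT
    by (symmetry; apply is_derive_unique; exact HdT).
  change (Derive (fun x => w x) p) with (Derive w p).
  assert (0 <= p * l) by nra.
  field; repeat split; lra.
Qed.

Section Modes.

Variables (M : nat) (lam : R) (lams : nat -> R).
Hypothesis Hlam : 0 < lam.
Hypothesis Hlams : forall r, (r < M)%nat -> 0 < lams r.
Hypothesis HM : (1 <= M)%nat.

Lemma mode_denom_pos r p t : (r < M)%nat -> 0 <= p -> 0 <= t ->
  0 < / lams r * (lam + t) + p.
Proof.
intros Hr Hp Ht; pose proof (Rinv_0_lt_compat _ (Hlams r Hr)).
assert (0 < / lams r * (lam + t)) by (apply Rmult_lt_0_compat; lra).
lra.
Qed.

Lemma mode_term_factor r p t : (r < M)%nat -> 0 <= p -> 0 <= t ->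
  / (/ lams r + p / (lam + t)) = (lam + t) / (/ lams r * (lam + t) + p).
Proof.
intros Hr Hp Ht; pose proof (mode_denom_pos r p t Hr Hp Ht); pose proof (Hlams r Hr).
field; repeat split; nra.
Qed.

Lemma Fsc_factor p t : 0 <= p -> 0 <= t ->
  Fsc M lam lams p t = (lam + t) * sumR M (fun r => / (/ lams r * (lam + t) + p)).
Proof.
intros Hp Ht; unfold Fsc; rewrite <- sumR_mult_l; apply sumR_ext; intros r Hr.
now rewrite mode_term_factor.
Qed.

Definition cross_sum (p t q t' : R) : R :=
  sumR M (fun r => / ((/ lams r * (lam + t') + q) * (/ lams r * (lam + t) + p))).

Lemma cross_sum_ge0 p t q t' : 0 <= p -> 0 <= t -> 0 <= q -> 0 <= t' ->
  0 <= cross_sum p t q t'.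
Proof.
intros; apply sumR_ge0; intros r Hr; left.
apply Rinv_0_lt_compat, Rmult_lt_0_compat; apply mode_denom_pos; auto.
Qed.

Lemma Gam_cross_sum p t : 0 <= p -> 0 <= t ->
  Gam M lam lams p t = (lam + t) ^ 2 * cross_sum p t p t.
Proof.
intros Hp Ht; unfold Gam, cross_sum; rewrite <- sumR_mult_l; apply sumR_ext; intros r Hr.
pose proof (mode_denom_pos r p t Hr Hp Ht); pose proof (Hlams r Hr).
field; repeat split; nra.
Qed.

Lemma Fsc_secant p t q t' : 0 <= p -> 0 <= t -> 0 <= q -> 0 <= t' ->
  Fsc M lam lams q t' - Fsc M lam lams p t
  = (p * (lam + t') - q * (lam + t)) * cross_sum p t q t'.
Proof.
intros Hp Ht Hq Ht'; unfold Fsc, cross_sum.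
rewrite <- sumR_minus, <- sumR_mult_l; apply sumR_ext; intros r Hr.
rewrite !mode_term_factor by auto.
pose proof (mode_denom_pos r p t Hr Hp Ht); pose proof (mode_denom_pos r q t' Hr Hq Ht').
pose proof (Hlams r Hr).
field; repeat split; nra.
Qed.

Lemma fixed_point_secant p t q t' : 0 <= p -> 0 <= t -> 0 <= q -> 0 <= t' ->
  t = Fsc M lam lams p t -> t' = Fsc M lam lams q t' ->
  (t' - t) * (1 - p * cross_sum p t q t') = - ((q - p) * (lam + t) * cross_sum p t q t').
Proof.
intros Hp Ht Hq Ht' Ft Ft'.
assert (Hsec : t' - t = (p * (lam + t') - q * (lam + t)) * cross_sum p t q t').
{ rewrite Ft at 1; rewrite Ft' at 1; now apply Fsc_secant. }
transitivity ((p * (lam + t') - q * (lam + t)) * cross_sum p t q t'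
              - p * cross_sum p t q t' * (t' - t)); [rewrite <- Hsec|]; ring.
Qed.

(* The fixed-point equation at [q] reads [sum_r 1/A_r = t'/(lam + t')], and [p/B_r <= 1]. *)
Lemma fixed_point_contraction p t q t' : 0 <= p -> 0 <= t -> 0 <= q -> 0 <= t' ->
  t' = Fsc M lam lams q t' -> lam / (lam + t') <= 1 - p * cross_sum p t q t'.
Proof.
intros Hp Ht Hq Ht' Ft'.
assert (Hsum : p * cross_sum p t q t' <= sumR M (fun r => / (/ lams r * (lam + t') + q))).
{ unfold cross_sum; rewrite <- sumR_mult_l; apply sumR_le; intros r Hr.
  pose proof (mode_denom_pos r p t Hr Hp Ht) as HB.
  pose proof (mode_denom_pos r q t' Hr Hq Ht') as HA.
  rewrite Rinv_mult.
  assert (p * / (/ lams r * (lam + t) + p) <= 1).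
  { pose proof (mode_denom_pos r 0 t Hr (Rle_refl 0) Ht).
    apply Rmult_le_reg_r with (/ lams r * (lam + t) + p); [lra|].
    rewrite Rmult_assoc, Rinv_l by lra; lra. }
  pose proof (Rinv_0_lt_compat _ HA). nra. }
rewrite Fsc_factor in Ft' by auto.
assert (t' / (lam + t') = sumR M (fun r => / (/ lams r * (lam + t') + q))) as Hfix.
{ rewrite Ft' at 1; field; lra. }
replace (lam / (lam + t')) with (1 - t' / (lam + t')) by (field; lra).
lra.
Qed.

Lemma cross_sum_le p t q t' : 0 <= p -> 0 <= t -> 0 <= q -> 0 <= t' ->
  (lam + t) * (lam + t') * cross_sum p t q t' <= sumR M (fun r => lams r ^ 2).
Proof.
intros Hp Ht Hq Ht'; unfold cross_sum; rewrite <- sumR_mult_l; apply sumR_le; intros r Hr.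
pose proof (mode_denom_pos r p t Hr Hp Ht) as HB.
pose proof (mode_denom_pos r q t' Hr Hq Ht') as HA.
pose proof (Hlams r Hr) as Hl.
set (A := / lams r * (lam + t') + q) in *; set (B := / lams r * (lam + t) + p) in *.
assert (lam + t' <= lams r * A) by (unfold A; field_simplify; nra).
assert (lam + t <= lams r * B) by (unfold B; field_simplify; nra).
apply Rmult_le_reg_r with (A * B); [nra|].
rewrite Rmult_assoc, Rinv_l by nra.
nra.
Qed.

Lemma fixed_point_unique p t t' : 0 <= p -> 0 <= t -> 0 <= t' ->
  t = Fsc M lam lams p t -> t' = Fsc M lam lams p t' -> t' = t.
Proof.
intros Hp Ht Ht' Ft Ft'.
pose proof (fixed_point_secant p t p t' Hp Ht Hp Ht' Ft Ft') as Hsec.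
pose proof (fixed_point_contraction p t p t' Hp Ht Hp Ht' Ft') as Hcon.
assert (0 < lam / (lam + t')) by (apply Rdiv_lt_0_compat; lra).
replace (- ((p - p) * (lam + t) * cross_sum p t p t')) with 0 in Hsec by ring.
destruct (Rmult_integral _ _ Hsec); lra.
Qed.

Lemma mode_term_le r p t : (r < M)%nat -> 0 <= p -> 0 <= t ->
  / (/ lams r + p / (lam + t)) <= lams r.
Proof.
intros Hr Hp Ht; rewrite mode_term_factor by auto.
pose proof (mode_denom_pos r p t Hr Hp Ht); pose proof (Hlams r Hr).
apply Rmult_le_reg_r with (/ lams r * (lam + t) + p); [lra|].
unfold Rdiv; rewrite Rmult_assoc, Rinv_l by lra.
field_simplify; nra.
Qed.

Lemma Fsc_le p t : 0 <= p -> 0 <= t -> Fsc M lam lams p t <= sumR M lams.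
Proof. intros; apply sumR_le; intros; now apply mode_term_le. Qed.

Lemma Fsc_gt0 p t : 0 <= p -> 0 <= t -> 0 < Fsc M lam lams p t.
Proof.
intros Hp Ht; apply sumR_gt0; [exact HM|]; intros r Hr.
rewrite mode_term_factor by auto.
pose proof (mode_denom_pos r p t Hr Hp Ht); apply Rdiv_lt_0_compat; lra.
Qed.

Lemma Fsc_continuous p t : 0 <= p -> 0 <= t -> continuity_pt (Fsc M lam lams p) t.
Proof.
intros Hp Ht; apply derivable_continuous_pt, ex_derive_Reals_0.
apply (ex_derive_sumR M (fun r t => / (/ lams r + p / (lam + t)))); intros r Hr.
pose proof (mode_denom_pos r p t Hr Hp Ht); pose proof (Hlams r Hr).
auto_derive; split; [lra|split; [|exact I]].
replace (/ lams r + p * / (lam + t)) with ((/ lams r * (lam + t) + p) / (lam + t))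
  by (field; lra).
apply Rgt_not_eq, Rdiv_lt_0_compat; lra.
Qed.

Lemma fixed_point_exists p : 0 <= p ->
  exists t, 0 < t /\ t = Fsc M lam lams p t.
Proof.
intros Hp.
pose proof (sumR_gt0 M lams HM Hlams) as HL.
destruct (IVT_interv (fun t => t - Fsc M lam lams p t) 0 (sumR M lams + 1))
  as [t [[Ht _] Hzero]].
- intros t [Ht _]; apply continuity_pt_minus;
    [apply derivable_continuous_pt, derivable_pt_id | now apply Fsc_continuous].
- lra.
- pose proof (Fsc_gt0 p 0 Hp (Rle_refl 0)); lra.
- pose proof (Fsc_le p (sumR M lams + 1) Hp ltac:(lra)); lra.
- pose proof (Fsc_gt0 p t Hp Ht); exists t; split; lra.
Qed.

Section SolutionMap.

Variable T : R -> R.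
Hypothesis HT : forall p, 0 <= p -> 0 < T p /\ T p = Fsc M lam lams p (T p).

Lemma solution_lipschitz p q : 0 <= p -> 0 <= q ->
  lam * Rabs (T q - T p) <= sumR M (fun r => lams r ^ 2) * Rabs (q - p).
Proof.
intros Hp Hq; destruct (HT p Hp) as [Tp Fp]; destruct (HT q Hq) as [Tq Fq].
pose proof (fixed_point_secant p (T p) q (T q) Hp ltac:(lra) Hq ltac:(lra) Fp Fq) as Hsec.
pose proof (fixed_point_contraction p (T p) q (T q) Hp ltac:(lra) Hq ltac:(lra) Fq) as Hcon.
pose proof (cross_sum_le p (T p) q (T q) Hp ltac:(lra) Hq ltac:(lra)) as Hle.
pose proof (cross_sum_ge0 p (T p) q (T q) Hp ltac:(lra) Hq ltac:(lra)) as Hge.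
set (S := cross_sum p (T p) q (T q)) in *.
assert (Hcon' : lam <= (1 - p * S) * (lam + T q)).
{ apply Rmult_le_reg_r with (/ (lam + T q)); [apply Rinv_0_lt_compat; lra|].
  rewrite Rmult_assoc, Rinv_r, Rmult_1_r by lra; exact Hcon. }
assert (Habs : Rabs (T q - T p) * (1 - p * S) = Rabs (q - p) * (lam + T p) * S).
{ rewrite <- (Rabs_pos_eq (1 - p * S)) by (assert (0 < lam / (lam + T q))
    by (apply Rdiv_lt_0_compat; lra); lra).
  rewrite <- Rabs_mult, Hsec, Rabs_Ropp, !Rabs_mult, (Rabs_pos_eq (lam + T p)),
    (Rabs_pos_eq S); lra. }
pose proof (Rabs_pos (T q - T p)); pose proof (Rabs_pos (q - p)).
apply Rle_trans with (Rabs (T q - T p) * (1 - p * S) * (lam + T q)); [nra|].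
rewrite Habs; nra.
Qed.

Lemma solution_continuous p : 0 <= p -> limit1_in T (nonneg_punctured p) (T p) p.
Proof.
intros Hp eps Heps; set (L := sumR M (fun r => lams r ^ 2)).
assert (HL : 0 <= L) by (apply sumR_ge0; intros; apply pow2_ge_0).
exists (lam * eps / (L + 1)); split; [apply Rdiv_lt_0_compat; nra|].
intros q [[Hq _] Hqp]; simpl in Hqp |- *; unfold R_dist in Hqp |- *.
pose proof (solution_lipschitz p q Hp Hq) as Hlip; fold L in Hlip.
pose proof (Rabs_pos (q - p)).
assert (Hd : (L + 1) * Rabs (q - p) < lam * eps).
{ apply Rmult_lt_reg_r with (/ (L + 1)); [apply Rinv_0_lt_compat; lra|].
  replace ((L + 1) * Rabs (q - p) * / (L + 1)) with (Rabs (q - p)) by (field; lra).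
  exact Hqp. }
nra.
Qed.

Lemma cross_sum_continuous p : 0 <= p ->
  limit1_in (fun q => cross_sum p (T p) q (T q)) (nonneg_punctured p)
    (cross_sum p (T p) p (T p)) p.
Proof.
intros Hp; pose proof (solution_continuous p Hp) as HTlim.
pose proof (proj1 (HT p Hp)) as Tp.
apply (limit1_in_sumR M
  (fun r q => / ((/ lams r * (lam + T q) + q) * (/ lams r * (lam + T p) + p)))).
intros r Hr; pose proof (mode_denom_pos r p (T p) Hr Hp ltac:(lra)) as HB.
apply (limit_inv (fun q => (/ lams r * (lam + T q) + q) * (/ lams r * (lam + T p) + p)));
  [|nra].
apply (limit_mul (fun q => / lams r * (lam + T q) + q) (fun _ => / lams r * (lam + T p) + p));
  [|apply limit1_in_const].
apply (limit_plus (fun q => / lams r * (lam + T q)) (fun q => q)); [|apply lim_x].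
apply (limit_mul (fun _ => / lams r) (fun q => lam + T q)); [apply limit1_in_const|].
apply (limit_plus (fun _ => lam) T); [apply limit1_in_const | exact HTlim].
Qed.

Lemma solution_difference_quotient p q : 0 <= p -> nonneg_punctured p q ->
  (T q - T p) / (q - p)
  = - ((lam + T p) * cross_sum p (T p) q (T q)) / (1 - p * cross_sum p (T p) q (T q)).
Proof.
intros Hp [Hq Hqp]; destruct (HT p Hp) as [Tp Fp]; destruct (HT q Hq) as [Tq Fq].
pose proof (fixed_point_secant p (T p) q (T q) Hp ltac:(lra) Hq ltac:(lra) Fp Fq) as Hsec.
pose proof (fixed_point_contraction p (T p) q (T q) Hp ltac:(lra) Hq ltac:(lra) Fq) as Hcon.
assert (0 < lam / (lam + T q)) by (apply Rdiv_lt_0_compat; lra).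
set (S := cross_sum p (T p) q (T q)) in *.
assert (HTq : T q - T p = - ((q - p) * (lam + T p) * S) / (1 - p * S))
  by (rewrite <- Hsec; field; lra).
rewrite HTq; field; split; lra.
Qed.

Lemma tderiv_cross_sum p : 0 <= p ->
  tderiv M lam lams T p
  = - ((lam + T p) * cross_sum p (T p) p (T p)) / (1 - p * cross_sum p (T p) p (T p)).
Proof.
intros Hp; destruct (HT p Hp) as [Tp Fp].
pose proof (fixed_point_contraction p (T p) p (T p) Hp ltac:(lra) Hp ltac:(lra) Fp).
assert (0 < lam / (lam + T p)) by (apply Rdiv_lt_0_compat; lra).
unfold tderiv; rewrite Gam_cross_sum by lra.
field; split; [lra|].
replace ((lam + T p) ^ 2 - p * ((lam + T p) ^ 2 * cross_sum p (T p) p (T p)))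
  with ((lam + T p) ^ 2 * (1 - p * cross_sum p (T p) p (T p))) by ring.
apply Rmult_integral_contrapositive; split; [apply pow_nonzero|]; lra.
Qed.

Lemma solution_derivative_limit p : 0 <= p ->
  limit1_in (fun q => (T q - T p) / (q - p)) (nonneg_punctured p)
    (tderiv M lam lams T p) p.
Proof.
intros Hp; destruct (HT p Hp) as [Tp Fp].
pose proof (fixed_point_contraction p (T p) p (T p) Hp ltac:(lra) Hp ltac:(lra) Fp).
assert (0 < lam / (lam + T p)) by (apply Rdiv_lt_0_compat; lra).
pose proof (cross_sum_continuous p Hp) as HS.
set (S := fun q => cross_sum p (T p) q (T q)) in HS.
rewrite tderiv_cross_sum by exact Hp.
intros eps Heps.
assert (Hlim : limit1_in (fun q => - ((lam + T p) * S q) / (1 - p * S q))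
                 (nonneg_punctured p) (- ((lam + T p) * S p) / (1 - p * S p)) p).
{ apply (limit_mul (fun q => - ((lam + T p) * S q)) (fun q => / (1 - p * S q))).
  - apply (limit_Ropp (fun q => (lam + T p) * S q)), (limit_mul (fun _ => lam + T p) S);
      [apply limit1_in_const | exact HS].
  - apply (limit_inv (fun q => 1 - p * S q)); [|unfold S; lra].
    apply (limit_minus (fun _ => 1) (fun q => p * S q)); [apply limit1_in_const|].
    apply (limit_mul (fun _ => p) S); [apply limit1_in_const | exact HS]. }
destruct (Hlim eps Heps) as [delta [Hdelta Hclose]].
exists delta; split; [exact Hdelta|]; intros q Hq.
rewrite solution_difference_quotient by (exact Hp || apply Hq).
exact (Hclose q Hq).
Qed.

Lemma Gam_solution_lt p : 0 <= p -> p * Gam M lam lams p (T p) < (lam + T p) ^ 2.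
Proof.
intros Hp; destruct (HT p Hp) as [Tp Fp].
pose proof (fixed_point_contraction p (T p) p (T p) Hp ltac:(lra) Hp ltac:(lra) Fp).
assert (0 < lam / (lam + T p)) by (apply Rdiv_lt_0_compat; lra).
assert (0 < (lam + T p) ^ 2) by (apply pow_lt; lra).
rewrite Gam_cross_sum by lra; nra.
Qed.

Lemma tderiv_lt0 p : 0 <= p -> tderiv M lam lams T p < 0.
Proof.
intros Hp; destruct (HT p Hp) as [Tp Fp].
pose proof (fixed_point_contraction p (T p) p (T p) Hp ltac:(lra) Hp ltac:(lra) Fp).
assert (0 < lam / (lam + T p)) by (apply Rdiv_lt_0_compat; lra).
assert (HS : 0 < cross_sum p (T p) p (T p)).
{ apply sumR_gt0; [exact HM|]; intros r Hr.
  pose proof (mode_denom_pos r p (T p) Hr Hp ltac:(lra)).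
  apply Rinv_0_lt_compat, Rmult_lt_0_compat; lra. }
rewrite tderiv_cross_sum by exact Hp.
apply Rdiv_neg_pos; [|lra].
apply Ropp_lt_gt_0_contravar, Rmult_lt_0_compat; lra.
Qed.

Lemma solution_is_derive p : 0 < p -> is_derive T p (tderiv M lam lams T p).
Proof.
intros Hp; apply is_derive_Reals, derivable_pt_lim_of_nonneg_limit; [exact Hp|].
apply solution_derivative_limit; lra.
Qed.

Lemma ex_derive_Gam_solution p : 0 < p -> ex_derive (fun q => Gam M lam lams q (T q)) p.
Proof.
intros Hp; pose proof (proj1 (HT p ltac:(lra))) as Tp.
pose proof (solution_is_derive p Hp) as HdT.
apply (ex_derive_sumR M (fun r q => / (/ lams r + q / (lam + T q)) ^ 2)); intros r Hr.
pose proof (Rinv_0_lt_compat _ (Hlams r Hr)).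
assert (0 < p * / (lam + T p)) by (apply Rmult_lt_0_compat; [|apply Rinv_0_lt_compat]; lra).
auto_derive; repeat split; try lra; [exists (tderiv M lam lams T p); exact HdT|].
apply Rgt_not_eq, Rmult_lt_0_compat; lra.
Qed.

Lemma deriv_p_div_lam_add_T_pos p : 0 < p ->
  0 < / (lam + T p) - p * tderiv M lam lams T p / (lam + T p) ^ 2.
Proof.
intros Hp; pose proof (proj1 (HT p ltac:(lra))) as Tp.
pose proof (tderiv_lt0 p ltac:(lra)).
assert (0 < / (lam + T p)) by (apply Rinv_0_lt_compat; lra).
assert (0 < / (lam + T p) ^ 2) by (apply Rinv_0_lt_compat, pow_lt; lra).
assert (p * tderiv M lam lams T p < 0) by nra.
unfold Rdiv; nra.
Qed.

Lemma ln_Emode_slope_lt (c : nat -> R) r g p :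
  (forall k, (k < M)%nat -> 0 < c k) ->
  (r < M)%nat -> (g < M)%nat -> lams r < lams g -> 0 < p ->
  exists dr dg,
    derivable_pt_lim (fun q => ln (Emode M lam lams c T r q)) p dr /\
    derivable_pt_lim (fun q => ln (Emode M lam lams c T g q)) p dg /\
    dg < dr.
Proof.
intros Hc Hr Hg Hrg Hp.
pose proof (proj1 (HT p ltac:(lra))) as Tp.
pose proof (solution_is_derive p Hp) as HdT.
pose proof (Gam_solution_lt p ltac:(lra)) as HGam.
set (w := fun q => / (1 - q * Gam M lam lams q (T q) / (lam + T q) ^ 2)).
assert (HGam' : p * Gam M lam lams p (T p) / (lam + T p) ^ 2 < 1).
{ assert (0 < (lam + T p) ^ 2) by (apply pow_lt; lra).
  apply Rmult_lt_reg_r with ((lam + T p) ^ 2); [lra|].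
  unfold Rdiv; rewrite Rmult_assoc, Rinv_l; lra. }
assert (Hw : 0 < w p) by (apply Rinv_0_lt_compat; lra).
assert (Hwd : ex_derive w p).
{ pose proof (ex_derive_Gam_solution p Hp) as HG.
  set (G := fun q => Gam M lam lams q (T q)) in HG.
  change (ex_derive (fun q => / (1 - q * G q / (lam + T q) ^ 2)) p).
  auto_derive; repeat split; [exact HG | exists (tderiv M lam lams T p); exact HdT | nra |].
  change (p * G p * / ((lam + T p) * ((lam + T p) * 1)))
    with (p * G p / (lam + T p) ^ 2).
  unfold G; lra. }
pose proof (deriv_p_div_lam_add_T_pos p Hp) as Hds.
set (ds := / (lam + T p) - p * tderiv M lam lams T p / (lam + T p) ^ 2) in *.
exists (-2 * ds / (/ lams r + p / (lam + T p)) + Derive w p / w p),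
       (-2 * ds / (/ lams g + p / (lam + T p)) + Derive w p / w p).
split; [|split].
- apply is_derive_Reals, (is_derive_ln_mode T w); auto.
- apply is_derive_Reals, (is_derive_ln_mode T w); auto.
- pose proof (Hlams r Hr); pose proof (Hlams g Hg).
  assert (0 < p / (lam + T p)) by (apply Rdiv_lt_0_compat; lra).
  assert (/ lams g < / lams r) by (apply Rinv_lt_contravar; nra).
  assert (0 < / lams g) by (apply Rinv_0_lt_compat; lra).
  assert (/ (/ lams r + p / (lam + T p)) < / (/ lams g + p / (lam + T p)))
    by (apply Rinv_lt_contravar; nra).
  unfold Rdiv at 1 3; nra.
Qed.

End SolutionMap.

End Modes.

Theorem mainTheorem4 (M : nat) (lam : R) (lams c : nat -> R)
  (HM : (1 <= M)%nat) (Hlam : 0 < lam)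
  (Hlams : forall r, (r < M)%nat -> 0 < lams r)
  (Hc : forall r, (r < M)%nat -> 0 < c r) :
  (forall p, 0 <= p -> exists! t, 0 < t /\ t = Fsc M lam lams p t) /\
  (forall T : R -> R,
     (forall p, 0 <= p -> 0 < T p /\ T p = Fsc M lam lams p (T p)) ->
     (forall p, 0 < p -> derivable_pt_lim T p (tderiv M lam lams T p)) /\
     limit1_in (fun h => (T h - T 0) / h) (fun h => 0 < h)
               (tderiv M lam lams T 0) 0 /\
     (forall p, 0 <= p ->
        p * Gam M lam lams p (T p) < (lam + T p) ^ 2) /\
     (forall p, 0 <= p -> tderiv M lam lams T p < 0) /\
     (forall r g, (r < M)%nat -> (g < M)%nat -> lams r < lams g ->
        forall p, 0 < p ->
          exists dr dg,
            derivable_pt_lim (fun q => ln (Emode M lam lams c T r q)) p dr /\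
            derivable_pt_lim (fun q => ln (Emode M lam lams c T g q)) p dg /\
            dg < dr)).
Proof.
split.
- intros p Hp.
  destruct (fixed_point_exists M lam lams Hlam Hlams HM p Hp) as [t [Ht Ft]].
  exists t; split; [split; assumption|].
  intros t' [Ht' Ft']; symmetry.
  exact (fixed_point_unique M lam lams Hlam Hlams p t t' Hp (Rlt_le _ _ Ht) (Rlt_le _ _ Ht') Ft Ft').
- intros T HT; repeat split.
  + intros p Hp; apply derivable_pt_lim_of_nonneg_limit; [exact Hp|].
    apply (solution_derivative_limit M lam lams Hlam Hlams T HT); lra.
  + apply right_limit_of_nonneg_limit.
    apply (solution_derivative_limit M lam lams Hlam Hlams T HT); lra.
  + exact (Gam_solution_lt M lam lams Hlam Hlams T HT).
  + exact (tderiv_lt0 M lam lams Hlam Hlams HM T HT).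
  + intros r g Hr Hg Hrg p Hp.
    exact (ln_Emode_slope_lt M lam lams Hlam Hlams HM T HT c r g p Hc Hr Hg Hrg Hp).
Qed.
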